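(* If $D$ is finite and the Fischer space $\Pi(D)$ has at least one line that is not a vanishing set, then $\overline{\mathcal{A}}=\mathcal{A}(D)/\mathcal{V}(D)$ is the direct product of all its minimal ideals. Furthermore, $G$ transitively permutes the minimal ideals of $\overline{\mathcal{A}}$.
   Context: Let $G$ be a group generated by a conjugacy class $D$ of involutions such that for all $d,e\in D$ the order of $de$ is $1$, $2$ or $3$. The Fischer space $\Pi(D)$ has point set $D$ and lines the triples $\{d,e,d^e\}$ with $d,e\in D$ non-commuting. $\mathcal{A}(D)$ is the $\mathbb{F}_2$-vector space of finite subsets of $D$ under symmetric difference (basis $D$), with bilinear product determined by $d*e=d+e+f$ if $\{d,e,f\}$ is a line and $d*e=0$ otherwise; $G$ acts on it by linear extension of conjugation. The bilinear form $\langle\cdot,\cdot\rangle$ is determined by $\langle d,e\rangle=1$ if $d,e$ do not commute and $0$ otherwise; $\mathcal{V}(D)$ is its radical, and a finite subset of $D$ is called vanishing if it lies in $\mathcal{V}(D)$. *)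

From HB Require Import structures.
From mathcomp Require Import all_boot all_order all_algebra all_fingroup.
From mathcomp Require Import generic_quotient.
Set Implicit Arguments. Unset Strict Implicit. Unset Printing Implicit Defensive.
Import GRing.Theory.
Local Open Scope ring_scope.
Local Open Scope quotient_scope.

Section Fischer.
Variables (gT : finGroupType) (D : {set gT}).

Definition elD : Type := {x : gT | x \in D}.
HB.instance Definition _ := Finite.on elD.

(** A(D): F_2-vector space with basis D; a finite subset S of D is
    identified with its indicator function *)
Notation algA := {ffun elD -> 'F_2}.

Definition ncomm (d e : elD) : bool := (val d * val e != val e * val d)%g.

Definition bvec (d : elD) : algA := [ffun x => (x == d)%:R].

Definition indic (S : {set gT}) : algA := [ffun x => (val x \in S)%:R].

Definition prodD (d e : elD) : algA :=
  if ncomm d e then bvec d + bvec e + [ffun x => (val x == (val d ^ val e)%g)%:R]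
  else 0.

Definition mulA (X Y : algA) : algA :=
  [ffun x => \sum_(d : elD) \sum_(e : elD) X d * Y e * prodD d e x].

Definition formA (X Y : algA) : 'F_2 :=
  \sum_(d : elD) X d * \sum_(e : elD) (ncomm d e)%:R * Y e.

Definition inV (X : algA) : bool := [forall Y, formA X Y == 0].

Definition vanishing (S : {set gT}) : bool := (S \subset D) && inV (indic S).

Lemma formA_sub X Z Y : formA (X - Z) Y = formA X Y - formA Z Y.
Proof.
rewrite /formA -sumrB; apply: eq_bigr => d _.
by rewrite !ffunE mulrBl.
Qed.

Lemma formA0 Y : formA 0 Y = 0.
Proof. by rewrite /formA big1 // => d _; rewrite ffunE mul0r. Qed.

Lemma formA_opp X Y : formA (- X) Y = - formA X Y.
Proof. by rewrite -sub0r formA_sub formA0 sub0r. Qed.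

Definition eqV (X Y : algA) : bool := inV (X - Y).

Lemma eqV_refl : reflexive eqV.
Proof. by move=> X; apply/forallP => Y; rewrite subrr formA0. Qed.

Lemma eqV_sym : symmetric eqV.
Proof.
suff H : forall X Y, eqV X Y -> eqV Y X by move=> X Y; apply/idP/idP; apply: H.
move=> X Y /forallP H; apply/forallP => Z.
by rewrite -opprB formA_opp (eqP (H Z)) oppr0.
Qed.

Lemma eqV_trans : transitive eqV.
Proof.
move=> Y X Z /forallP H1 /forallP H2; apply/forallP => W.
have -> : X - Z = (X - Y) - - (Y - Z) by rewrite opprK addrA subrK.
by rewrite formA_sub formA_opp (eqP (H1 W)) (eqP (H2 W)) oppr0 subrr.
Qed.

Canonical eqV_equiv := EquivRel eqV eqV_refl eqV_sym eqV_trans.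

Definition Abar : Type := {eq_quot eqV}.
HB.instance Definition _ := [Finite of Abar by <:%/].

Definition zeroQ : Abar := \pi_Abar 0.
Definition addQ (x y : Abar) : Abar := \pi_Abar (repr x + repr y).
Definition mulQ (x y : Abar) : Abar := \pi_Abar (mulA (repr x) (repr y)).

(** ideals of the quotient algebra (over F_2 closure under scalars is
    automatic from closure under addition and containing 0) *)
Definition is_ideal (I : {set Abar}) : bool :=
  [&& zeroQ \in I,
      [forall x, forall y, (x \in I) ==> (y \in I) ==> (addQ x y \in I)] &
      [forall a, forall x, (x \in I) ==> (mulQ a x \in I) && (mulQ x a \in I)]].

Definition is_min_ideal (I : {set Abar}) : bool :=
  [&& is_ideal I, I != [set zeroQ] &
      [forall J : {set Abar}, (is_ideal J && (J \subset I)) ==>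
                              ((J == [set zeroQ]) || (J == I))]].

Definition min_ideals : {set {set Abar}} := [set I | is_min_ideal I].

Definition direct_sum_of_min_ideals : Prop :=
  forall x : Abar,
    (exists f : {set Abar} -> Abar,
        (forall I, I \in min_ideals -> f I \in I) /\
        x = \big[addQ/zeroQ]_(I in min_ideals) f I) /\
    (forall f f' : {set Abar} -> Abar,
        (forall I, I \in min_ideals -> f I \in I) ->
        (forall I, I \in min_ideals -> f' I \in I) ->
        \big[addQ/zeroQ]_(I in min_ideals) f I = x ->
        \big[addQ/zeroQ]_(I in min_ideals) f' I = x ->
        forall I, I \in min_ideals -> f I = f' I).

(** action of g on A(D) by linear extension of conjugation d |-> d^g *)
Definition actA (g : gT) (X : algA) : algA :=
  [ffun d : elD => X (insubd d (val d ^ g^-1)%g)].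

Definition actQ (g : gT) (x : Abar) : Abar := \pi_Abar (actA g (repr x)).

End Fischer.

(* For a point d of the Fischer space and X in A(D) one has
     d * X = X + X^d + <d, X> d,
   using that non-commuting points satisfy d^e = e^d (as de has order 3).
   Hence V(D) is a G-invariant ideal.  Moreover a subspace of the quotient
   that is G-stable, stable under multiplication by points and contains
   some X + V(D) != 0 contains a point (take d with <d, X> = 1), hence all
   points (G is transitive on D), hence everything.  Applied to the
   annihilator, which misses the product of two points on a non-vanishing
   line, this shows that the annihilator is trivial; applied to the G-span
   of a minimal ideal I, it shows that the translates I^g span.  Distinct
   minimal ideals meet trivially, so they annihilate each other; therefore
   every minimal ideal is some I^g, and the sum is direct because the
   components of the difference of two decompositions annihilate everything. *)

From Pilot Require Import Defs.
From mathcomp Require Import all_boot all_order all_algebra all_fingroup.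
From HB Require Import structures.
From mathcomp Require Import generic_quotient ring.
Set Implicit Arguments. Unset Strict Implicit. Unset Printing Implicit Defensive.
Import GRing.Theory.
Local Open Scope ring_scope.
Local Open Scope quotient_scope.

Lemma F2_cases (x : 'F_2) : x = 0 \/ x = 1.
Proof. by case: x => [[|[|]]] //= ?; [left | right]; apply: val_inj. Qed.

Lemma pchar_F2 : 2 \in [pchar 'F_2]. Proof. exact: pchar_Fp. Qed.

Lemma sum_eq_mull (I : finType) (R : pzSemiRingType) (F : I -> R) i :
  \sum_j (j == i)%:R * F j = F i.
Proof.
rewrite (bigD1 i) //= big1 => [|j /negbTE->]; first by rewrite eqxx mul1r addr0.
by rewrite mul0r.
Qed.

Lemma sum_eq_mulr (I : finType) (R : pzSemiRingType) (F : I -> R) i :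
  \sum_j F j * (i == j)%:R = F i.
Proof.
rewrite -[RHS](sum_eq_mull F); apply: eq_bigr => j _.
by rewrite eq_sym; case: (j == i); rewrite ?mulr1 ?mul1r ?mulr0 ?mul0r.
Qed.

Lemma natr_or3 (R : pzSemiRingType) (p q r : bool) :
  ~~ (p && q) -> ~~ (p && r) -> ~~ (q && r) -> (p || q || r)%:R = p%:R + q%:R + r%:R :> R.
Proof. by case: p; case: q; case: r; rewrite //= ?addr0 ?add0r. Qed.

(** * The radical and the quotient *)

Section FormQuotient.
Variables (gT : finGroupType) (D : {set gT}).
Local Notation elD := (elD D).
Local Notation algA := {ffun elD -> 'F_2}.
Local Notation Abar := (Abar D).
Local Notation zQ := (zeroQ D).
Local Notation addQ := (@addQ gT D).

Lemma oppA_pchar2 (X : algA) : - X = X.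
Proof. by apply/ffunP => x; rewrite !ffunE oppr_pchar2 // pchar_F2. Qed.

Lemma addAA_pchar2 (X : algA) : X + X = 0.
Proof. by apply/ffunP => x; rewrite !ffunE addrr_pchar2 // pchar_F2. Qed.

(* ['F_2] is not canonically a module over itself, so [algA] has no [*:]. *)
Definition scaleA (a : 'F_2) (X : algA) : algA := [ffun x => a * X x].

Lemma scale0A (X : algA) : scaleA 0 X = 0.
Proof. by apply/ffunP => x; rewrite !ffunE mul0r. Qed.

Lemma scale1A (X : algA) : scaleA 1 X = X.
Proof. by apply/ffunP => x; rewrite !ffunE mul1r. Qed.

Lemma bvec_sum (X : algA) : X = \sum_(e : elD | X e != 0) bvec e.
Proof.
apply/ffunP => x; rewrite sum_ffunE big_mkcond -[LHS](sum_eq_mulr X x) /=.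
apply: eq_bigr => e _; rewrite !ffunE.
by case: (F2_cases (X e)) => ->; rewrite /= ?mul0r ?mul1r.
Qed.

Lemma ncommC (d e : elD) : ncomm d e = ncomm e d.
Proof. by rewrite /ncomm eq_sym. Qed.

Lemma formAE (X Y : algA) :
  formA X Y = \sum_(d : elD) \sum_(e : elD) X d * (ncomm d e)%:R * Y e.
Proof.
by apply: eq_bigr => d _; rewrite big_distrr; apply: eq_bigr => e _ /=; rewrite mulrA.
Qed.

Lemma formAC (X Y : algA) : formA X Y = formA Y X.
Proof.
rewrite !formAE exchange_big; apply: eq_bigr => d _; apply: eq_bigr => e _ /=.
by rewrite ncommC; ring.
Qed.

Lemma formA_bvecl d (X : algA) :
  formA (bvec d) X = \sum_(e : elD) (ncomm d e)%:R * X e.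
Proof.
rewrite -(sum_eq_mull (fun d => \sum_(e : elD) (ncomm d e)%:R * X e) d).
by apply: eq_bigr => e _; rewrite ffunE.
Qed.

Lemma formADl (X X' Y : algA) : formA (X + X') Y = formA X Y + formA X' Y.
Proof. by rewrite /formA -big_split; apply: eq_bigr => d _; rewrite ffunE mulrDl. Qed.

Lemma formA_suml (I : finType) (P : pred I) (F : I -> algA) Y :
  formA (\sum_(i | P i) F i) Y = \sum_(i | P i) formA (F i) Y.
Proof. exact: (big_morph (fun X => formA X Y) (fun X X' => formADl X X' Y) (formA0 Y)). Qed.

Lemma inVP (X : algA) : reflect (forall Y, formA X Y = 0) (inV X).
Proof. by apply: (iffP forallP) => H Y; apply/eqP. Qed.

Lemma inV_bvecP (X : algA) : reflect (forall d, formA (bvec d) X = 0) (inV X).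
Proof.
apply: (iffP (inVP X)) => [H d | H Y]; first by rewrite formAC.
by rewrite formAC [Y]bvec_sum formA_suml big1.
Qed.

Lemma inV0 : inV (0 : algA).
Proof. by apply/inVP => Y; rewrite formA0. Qed.

Lemma inVD (X Y : algA) : inV X -> inV Y -> inV (X + Y).
Proof. by move=> /inVP HX /inVP HY; apply/inVP => Z; rewrite formADl HX HY addr0. Qed.

Lemma inV_sum (I : finType) (P : pred I) (F : I -> algA) :
  (forall i, P i -> inV (F i)) -> inV (\sum_(i | P i) F i).
Proof. by apply: (big_ind (@inV _ D)); [exact: inV0 | exact: inVD]. Qed.

Definition pi (X : algA) : Abar := \pi_Abar X.

Lemma piP (X Y : algA) : reflect (pi X = pi Y) (inV (X - Y)).
Proof. exact: (@eqquotP _ _ Abar X Y). Qed.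

Lemma inV_reprB (X : algA) : inV (repr (pi X) - X).
Proof. by apply/piP; rewrite /pi reprK. Qed.

Lemma zeroQE : zQ = pi 0. Proof. by []. Qed.

Lemma piD (X Y : algA) : addQ (pi X) (pi Y) = pi (X + Y).
Proof. by apply/piP; rewrite opprD addrACA; apply: inVD; apply: inV_reprB. Qed.

Lemma pi_sum (I : finType) (P : pred I) (F : I -> algA) :
  pi (\sum_(i | P i) F i) = \big[addQ/zQ]_(i | P i) pi (F i).
Proof. by apply: (big_morph pi) => [X Y|]; rewrite ?piD. Qed.

Lemma addQA : associative addQ.
Proof. by elim/quotW=> X; elim/quotW=> Y; elim/quotW=> Z; rewrite -!/(pi _) !piD addrA. Qed.

Lemma addQC : commutative addQ.
Proof. by elim/quotW=> X; elim/quotW=> Y; rewrite -!/(pi _) !piD addrC. Qed.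

Lemma add0Q : left_id zQ addQ.
Proof. by elim/quotW=> X; rewrite -!/(pi _) zeroQE piD add0r. Qed.

Lemma addQ0 : right_id zQ addQ.
Proof. by move=> x; rewrite addQC add0Q. Qed.

Lemma addQxx (x : Abar) : addQ x x = zQ.
Proof. by elim/quotW: x => X; rewrite -!/(pi _) piD addAA_pchar2. Qed.

Lemma addQ_eq0 (x y : Abar) : addQ x y = zQ -> x = y.
Proof. by move=> xy0; rewrite -[x]addQ0 -(addQxx y) addQA xy0 add0Q. Qed.

End FormQuotient.

HB.instance Definition _ (gT : finGroupType) (D : {set gT}) :=
  Monoid.isComLaw.Build (Abar D) (zeroQ D) (@addQ gT D)
    (@addQA gT D) (@addQC gT D) (@add0Q gT D).

(** * The G-action and the product *)

Open Scope group_scope.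

Lemma conjg_braid (gT : finGroupType) (d e : gT) :
  d^-1 = d -> e^-1 = e -> #[d * e] \in [:: 1; 2; 3]%N -> d * e != e * d ->
  d ^ e = e ^ d.
Proof.
move=> dV eV + nde; have de_o := expg_order (d * e).
rewrite !inE => /or3P[] /eqP o_de; rewrite o_de in de_o.
- by move/eqP: de_o; rewrite expg1 -eq_invg_mul dV => /eqP de; rewrite de eqxx in nde.
- move/eqP: de_o; rewrite expgS expg1 -eq_invg_mul invMg dV eV => /eqP ed.
  by rewrite ed eqxx in nde.
- rewrite !expgS expg0 mulg1 !mulgA in de_o.
  have : (d * e * d)^-1 = e * d * e by apply/eqP; rewrite eq_invg_mul !mulgA de_o.
  by rewrite !invMg !conjgE dV eV !mulgA => ->.
Qed.

Close Scope group_scope.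

Section FischerAlgebra.
Variables (gT : finGroupType) (G : {group gT}) (D : {set gT}) (d0 : gT).
Hypotheses (Gd0 : d0 \in G) (Dclass : D = (d0 ^: G)%g).
Local Notation elD := (elD D).
Local Notation algA := {ffun elD -> 'F_2}.
Local Notation mulA := (@Defs.mulA gT D).
Local Notation Abar := (Abar D).
Local Notation zQ := (zeroQ D).
Local Notation addQ := (@addQ gT D).

Lemma memJ_D g d : g \in G -> d \in D -> (d ^ g)%g \in D.
Proof.
by move=> Gg; rewrite Dclass => /imsetP[y Gy ->]; rewrite -conjgM memJ_class ?groupM.
Qed.

Lemma D_subG : D \subset G.
Proof. by rewrite Dclass class_subG. Qed.

Lemma valG (d : elD) : val d \in G.
Proof. exact: subsetP D_subG _ (valP d). Qed.

Lemma D_conj_trans d e : d \in D -> e \in D -> exists2 g, g \in G & e = (d ^ g)%g.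
Proof. by rewrite Dclass => /class_eqP <- /imsetP. Qed.

Definition conjD (g : gT) (d : elD) : elD := insubd d (val d ^ g)%g.

Lemma conjDE g d : g \in G -> val (conjD g d) = (val d ^ g)%g.
Proof. by move=> Gg; rewrite val_insubd memJ_D ?(valP d). Qed.

Lemma conjDK g : g \in G -> cancel (conjD g) (conjD g^-1).
Proof. by move=> Gg d; apply: val_inj; rewrite !conjDE ?groupV ?conjgK. Qed.

Lemma conjDKV g : g \in G -> cancel (conjD g^-1) (conjD g).
Proof. by move=> Gg d; apply: val_inj; rewrite !conjDE ?groupV ?conjgKV. Qed.

Lemma conjD_inj g : g \in G -> injective (conjD g).
Proof. by move/conjDK/can_inj. Qed.

Lemma ncomm_conjD g d e : g \in G -> ncomm (conjD g d) (conjD g e) = ncomm d e.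
Proof. by move=> Gg; rewrite /ncomm !conjDE // -!conjMg (inj_eq (conjg_inj g)). Qed.

Lemma actAE g (X : algA) d : actA g X d = X (conjD g^-1 d).
Proof. by rewrite ffunE. Qed.

Lemma actA_bvec g e : g \in G -> actA g (bvec e) = bvec (conjD g e).
Proof.
by move=> Gg; apply/ffunP => d; rewrite !ffunE (can2_eq (conjDKV Gg) (conjDK Gg)).
Qed.

Lemma actAD g (X Y : algA) : actA g (X + Y) = actA g X + actA g Y.
Proof. by apply/ffunP => d; rewrite !ffunE. Qed.

Lemma actAN g (X : algA) : actA g (- X) = - actA g X.
Proof. by apply/ffunP => d; rewrite !ffunE. Qed.

Lemma actA0 g : actA g (0 : algA) = 0.
Proof. by apply/ffunP => d; rewrite !ffunE. Qed.

Lemma actAM g h (X : algA) : g \in G -> h \in G -> actA g (actA h X) = actA (h * g) X.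
Proof.
move=> Gg Gh; apply/ffunP => d; rewrite !ffunE; congr (X _); apply: val_inj.
by rewrite !conjDE ?groupV ?groupM // invMg conjgM.
Qed.

Lemma actA1 (X : algA) : actA 1 X = X.
Proof.
by apply/ffunP => d; rewrite actAE; congr (X _); apply: val_inj; rewrite conjDE ?invg1 ?conjg1.
Qed.

Lemma actAKV g (X : algA) : g \in G -> actA g (actA g^-1 X) = X.
Proof. by move=> Gg; rewrite actAM ?groupV // mulVg actA1. Qed.

Lemma formA_actA g (X Y : algA) : g \in G -> formA (actA g X) (actA g Y) = formA X Y.
Proof.
move=> Gg; rewrite !formAE (reindex_inj (conjD_inj Gg)); apply: eq_bigr => d _.
rewrite (reindex_inj (conjD_inj Gg)); apply: eq_bigr => e _.
by rewrite !actAE !conjDK // ncomm_conjD.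
Qed.

Lemma inV_actA g (X : algA) : g \in G -> inV X -> inV (actA g X).
Proof. by move=> Gg /inVP HX; apply/inVP => Y; rewrite -(actAKV Y Gg) formA_actA. Qed.

Hypothesis Dinv : forall d, d \in D -> #[d]%g = 2.
Hypothesis Dord : forall d e, d \in D -> e \in D -> #[(d * e)%g]%g \in [:: 1; 2; 3]%N.

Lemma D_invg d : d \in D -> (d^-1 = d)%g.
Proof.
move=> Dd; apply/eqP; rewrite eq_invg_mul.
by have := expg_order d; rewrite Dinv // expgS expg1 => ->.
Qed.

Lemma conjD_comm (d e : elD) : ~~ ncomm d e -> conjD (val d) e = e.
Proof.
rewrite /ncomm negbK => /eqP de; apply: val_inj.
by rewrite conjDE ?valG // conjgE -de mulKg.
Qed.

Lemma conjD_ncomm (d e : elD) : ncomm d e -> conjD (val d) e = conjD (val e) d.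
Proof.
move=> nde; apply: val_inj; rewrite !conjDE ?valG //.
by apply: conjg_braid; rewrite ?D_invg ?Dord ?(valP d) ?(valP e) // -/(ncomm e d) ncommC.
Qed.

Lemma prodDE (d e : elD) :
  prodD d e = if ncomm d e then bvec d + bvec e + bvec (conjD (val e) d) else 0.
Proof.
rewrite /prodD; case: ifP => // _; congr (_ + _); apply/ffunP => y.
by rewrite !ffunE -val_eqE /= conjDE ?valG.
Qed.

Lemma prodDC (d e : elD) : prodD d e = prodD e d.
Proof.
rewrite !prodDE ncommC; case: ifP => // nde.
by rewrite -(conjD_ncomm nde) [bvec e + _]addrC.
Qed.

Lemma prodD_conj (d e : elD) :
  prodD d e = bvec e + actA (val d) (bvec e) + scaleA (ncomm d e)%:R (bvec d).
Proof.
rewrite prodDE actA_bvec ?valG //; case: ifP => nde.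
  by rewrite scale1A (conjD_ncomm nde) [RHS]addrC addrA.
by rewrite scale0A addr0 conjD_comm ?nde // addAA_pchar2.
Qed.

Lemma mulA_bvecl d (X : algA) :
  mulA (bvec d) X = [ffun y => \sum_(e : elD) X e * prodD d e y].
Proof.
apply/ffunP => y; rewrite !ffunE.
rewrite -(sum_eq_mull (fun d => \sum_(e : elD) X e * prodD d e y)).
by apply: eq_bigr => d' _; rewrite big_distrr; apply: eq_bigr => e _ /=; rewrite ffunE mulrA.
Qed.

Lemma mulA_bvecE d (X : algA) :
  mulA (bvec d) X = X + actA (val d) X + scaleA (formA (bvec d) X) (bvec d).
Proof.
rewrite mulA_bvecl formA_bvecl; apply/ffunP => y; rewrite !ffunE.
under eq_bigr => e _ do rewrite prodD_conj !ffunE !mulrDr.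
rewrite !big_split /= !sum_eq_mulr big_distrl /=.
by congr (_ + _); apply: eq_bigr => e _; ring.
Qed.

Lemma mulAC (X Y : algA) : mulA X Y = mulA Y X.
Proof.
apply/ffunP => y; rewrite !ffunE exchange_big; apply: eq_bigr => d _.
by apply: eq_bigr => e _; rewrite prodDC; ring.
Qed.

Lemma mulADl (X X' Y : algA) : mulA (X + X') Y = mulA X Y + mulA X' Y.
Proof.
apply/ffunP => y; rewrite !ffunE -big_split; apply: eq_bigr => d _.
by rewrite -big_split; apply: eq_bigr => e _ /=; rewrite ffunE; ring.
Qed.

Lemma mulADr (X Y Y' : algA) : mulA X (Y + Y') = mulA X Y + mulA X Y'.
Proof. by rewrite mulAC mulADl !(mulAC X). Qed.

Lemma mul0A (Y : algA) : mulA 0 Y = 0.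
Proof.
apply/ffunP => y; rewrite !ffunE big1 // => d _.
by rewrite big1 // => e _; rewrite ffunE !mul0r.
Qed.

Lemma mulA_suml (I : finType) (P : pred I) (F : I -> algA) Y :
  mulA (\sum_(i | P i) F i) Y = \sum_(i | P i) mulA (F i) Y.
Proof. exact: (big_morph (fun X => mulA X Y) (fun X X' => mulADl X X' Y) (mul0A Y)). Qed.

Lemma inV_mulAr (X Y : algA) : inV Y -> inV (mulA X Y).
Proof.
move=> VY; rewrite [X]bvec_sum mulA_suml; apply: inV_sum => d _.
rewrite mulA_bvecE formAC (inVP _ VY) scale0A addr0.
by apply: inVD => //; apply: inV_actA; rewrite ?valG.
Qed.

Lemma inV_mulAl (X Y : algA) : inV X -> inV (mulA X Y).
Proof. by rewrite mulAC; apply: inV_mulAr. Qed.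

Lemma actA_prodD g d e : g \in G -> actA g (prodD d e) = prodD (conjD g d) (conjD g e).
Proof.
move=> Gg; rewrite !prodDE ncomm_conjD //; case: ifP => _; last exact: actA0.
rewrite !actAD !actA_bvec ?valG //; congr (_ + bvec _); apply: val_inj.
by rewrite !conjDE ?valG ?memJ_D ?groupJ ?valG // conjJg.
Qed.

Lemma actA_mulA g (X Y : algA) : g \in G -> actA g (mulA X Y) = mulA (actA g X) (actA g Y).
Proof.
move=> Gg; apply/ffunP => y; rewrite [LHS]ffunE !ffunE.
rewrite [RHS](reindex_inj (conjD_inj Gg)); apply: eq_bigr => d _.
rewrite [RHS](reindex_inj (conjD_inj Gg)); apply: eq_bigr => e _ /=.
by rewrite !actAE !conjDK // -actA_prodD // actAE.
Qed.

Lemma piM (X Y : algA) : mulQ (pi X) (pi Y) = pi (mulA X Y).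
Proof.
apply/piP; set rX := repr (pi X); set rY := repr (pi Y).
have -> : mulA rX rY - mulA X Y = mulA (rX - X) rY + mulA X (rY - Y).
  by rewrite !oppA_pchar2 mulADl mulADr -!addrA (addrA (mulA X rY)) addAA_pchar2 add0r.
by apply: inVD; [apply: inV_mulAl | apply: inV_mulAr]; apply: inV_reprB.
Qed.

Lemma piJ g (X : algA) : g \in G -> actQ g (pi X) = pi (actA g X).
Proof. by move=> Gg; apply/piP; rewrite -actAN -actAD inV_actA ?inV_reprB. Qed.

Lemma mulQC (x y : Abar) : mulQ x y = mulQ y x.
Proof. by elim/quotW: x => X; elim/quotW: y => Y; rewrite -!/(pi _) !piM mulAC. Qed.

Lemma mulQDl (x y z : Abar) : mulQ (addQ x y) z = addQ (mulQ x z) (mulQ y z).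
Proof.
elim/quotW: x => X; elim/quotW: y => Y; elim/quotW: z => Z.
by rewrite -!/(pi _) !(piM, piD) mulADl.
Qed.

Lemma mul0Q (x : Abar) : mulQ zQ x = zQ.
Proof. by elim/quotW: x => X; rewrite -!/(pi _) zeroQE piM mul0A. Qed.

Lemma mulQ_suml (I : finType) (P : pred I) (F : I -> Abar) y :
  mulQ (\big[addQ/zQ]_(i | P i) F i) y = \big[addQ/zQ]_(i | P i) mulQ (F i) y.
Proof. exact: (big_morph (fun x => mulQ x y) (fun x x' => mulQDl x x' y) (mul0Q y)). Qed.

Lemma mulQ_sumr (I : finType) (P : pred I) (F : I -> Abar) y :
  mulQ y (\big[addQ/zQ]_(i | P i) F i) = \big[addQ/zQ]_(i | P i) mulQ y (F i).
Proof. by rewrite mulQC mulQ_suml; apply: eq_bigr => i _; rewrite mulQC. Qed.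

Lemma actQD g (x y : Abar) : g \in G -> actQ g (addQ x y) = addQ (actQ g x) (actQ g y).
Proof.
by move=> Gg; elim/quotW: x => X; elim/quotW: y => Y; rewrite -!/(pi _) !(piJ, piD) // actAD.
Qed.

Lemma actQ0 g : g \in G -> actQ g zQ = zQ.
Proof. by move=> Gg; rewrite zeroQE piJ // actA0. Qed.

Lemma actQM g (x y : Abar) : g \in G -> actQ g (mulQ x y) = mulQ (actQ g x) (actQ g y).
Proof.
move=> Gg; elim/quotW: x => X; elim/quotW: y => Y.
by rewrite -!/(pi _) !(piJ, piM) // actA_mulA.
Qed.

Lemma actQ_sum g (I : finType) (P : pred I) (F : I -> Abar) : g \in G ->
  actQ g (\big[addQ/zQ]_(i | P i) F i) = \big[addQ/zQ]_(i | P i) actQ g (F i).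
Proof. by move=> Gg; apply: (big_morph (actQ g)) => [x y|]; [exact: actQD | exact: actQ0]. Qed.

Lemma actQ_mul g h (x : Abar) : g \in G -> h \in G -> actQ g (actQ h x) = actQ (h * g) x.
Proof. by move=> Gg Gh; elim/quotW: x => X; rewrite -!/(pi _) !piJ ?groupM // actAM. Qed.

Lemma actQ1 (x : Abar) : actQ 1 x = x.
Proof. by elim/quotW: x => X; rewrite -!/(pi _) piJ // actA1. Qed.

Lemma actQK g (x : Abar) : g \in G -> actQ g^-1 (actQ g x) = x.
Proof. by move=> Gg; rewrite actQ_mul ?groupV // mulgV actQ1. Qed.

Lemma actQKV g (x : Abar) : g \in G -> actQ g (actQ g^-1 x) = x.
Proof. by move=> Gg; rewrite actQ_mul ?groupV // mulVg actQ1. Qed.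

Lemma exists_formA_bvec (X : algA) : pi X != zQ -> exists d, formA (bvec d) X = 1.
Proof.
move=> nX; have [d /negP nd | all0] := pickP (fun d => formA (bvec d) X != 0).
  by exists d; case: (F2_cases (formA (bvec d) X)) nd => ->.
case/negP: nX; rewrite zeroQE; apply/eqP/piP; rewrite subr0; apply/inV_bvecP => d.
by apply/eqP/negbFE/all0.
Qed.

Lemma pi_bvec_mulQ d (X : algA) : formA (bvec d) X = 1 ->
  pi (bvec d) = addQ (mulQ (pi (bvec d)) (pi X)) (addQ (pi X) (actQ (val d) (pi X))).
Proof.
move=> dX; rewrite piM piJ ?valG // !piD mulA_bvecE dX scale1A; congr pi.
by rewrite addrAC addAA_pchar2 add0r.
Qed.

Lemma Gstable_full (I : {set Abar}) :
  zQ \in I -> (forall x y, x \in I -> y \in I -> addQ x y \in I) ->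
  (forall g x, g \in G -> x \in I -> actQ g x \in I) ->
  (forall d x, x \in I -> mulQ (pi (bvec d)) x \in I) ->
  (exists2 x, x \in I & x != zQ) -> forall y, y \in I.
Proof.
move=> I0 ID IG IM [x Ix nx]; move: Ix nx; elim/quotW: x => X; rewrite -/(pi X) => IX nX.
have [d dX] := exists_formA_bvec nX.
have Id : pi (bvec d) \in I.
  by rewrite (pi_bvec_mulQ dX) ID ?IM ?(ID _ _ IX) ?IG ?valG.
have Ie e : pi (bvec e) \in I.
  have [g Gg eJ] := D_conj_trans (valP d) (valP e).
  have -> : e = conjD g d by apply: val_inj; rewrite conjDE.
  by rewrite -actA_bvec // -piJ // IG.
elim/quotW => Y; rewrite -/(pi Y) (bvec_sum Y) pi_sum.
by apply: (big_ind (fun y => y \in I)).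
Qed.

Lemma mulA_bvec (d e : elD) : mulA (bvec d) (bvec e) = prodD d e.
Proof.
rewrite mulA_bvecl; apply/ffunP => y; rewrite ffunE.
by rewrite -(sum_eq_mull (fun e' => prodD d e' y) e); apply: eq_bigr => e' _; rewrite ffunE.
Qed.

Lemma line_subD (d e : elD) : [set val d; val e; (val d ^ val e)%g] \subset D.
Proof.
apply/subsetP => y; rewrite !inE => /orP[/orP[]|] /eqP->;
  by rewrite ?memJ_D ?valG ?(valP d) ?(valP e).
Qed.

Lemma indic_line (d e : elD) : ncomm d e ->
  indic D [set val d; val e; (val d ^ val e)%g] = prodD d e.
Proof.
rewrite /prodD /ncomm => nde; rewrite nde; apply/ffunP => y.
rewrite !ffunE !inE -!val_eqE /=.
have neq_de : val d != val e by apply: contra nde => /eqP->.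
have neq_dJd : (val d ^ val e)%g != val d.
  by apply: contra nde => /eqP dJ; rewrite -{2}dJ conjgE mulKVg.
have neq_dJe : (val d ^ val e)%g != val e.
  apply: contra neq_de => /eqP dJ.
  by rewrite -(inj_eq (@conjg_inj _ (val e))) dJ conjgE mulKg.
by apply: natr_or3; apply/andP => -[/eqP-> /eqP] => /eqP; apply/negP; rewrite // eq_sym.
Qed.

Hypothesis Hline : exists d e : elD,
  ncomm d e && ~~ vanishing D [set val d; val e; (val d ^ val e)%g].

Lemma exists_bvec_mulQ_neq0 : exists d e : elD, mulQ (pi (bvec d)) (pi (bvec e)) != zQ.
Proof.
have [d [e /andP[nde nvan]]] := Hline; exists d, e.
move: nvan; rewrite /vanishing line_subD indic_line // -mulA_bvec.
by apply: contra => /eqP; rewrite piM zeroQE => /piP; rewrite subr0.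
Qed.

Lemma annQ_eq0 (x : Abar) : (forall y, mulQ x y = zQ) -> x = zQ.
Proof.
move=> xA0; have [//|nx] := eqVneq x zQ; exfalso.
pose A := [set z : Abar | [forall y, mulQ z y == zQ]].
have A_full : forall z, z \in A.
  apply: Gstable_full.
  - by rewrite inE; apply/forallP => y; rewrite mul0Q.
  - move=> a b; rewrite !inE => /forallP aA /forallP bA; apply/forallP => y.
    by rewrite mulQDl (eqP (aA y)) (eqP (bA y)) add0Q.
  - move=> g a Gg; rewrite !inE => /forallP aA; apply/forallP => y.
    by rewrite -(actQKV y Gg) -actQM // (eqP (aA _)) actQ0.
  - move=> d a; rewrite !inE => /forallP aA; apply/forallP => y.
    by rewrite (mulQC _ a) (eqP (aA _)) mul0Q.
  - by exists x; rewrite // inE; apply/forallP => y; rewrite xA0.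
have [d [e]] := exists_bvec_mulQ_neq0.
by have := A_full (pi (bvec d)); rewrite inE => /forallP/(_ (pi (bvec e)))->.
Qed.

Lemma exists_mulQ_neq0 (x : Abar) : x != zQ -> exists y, mulQ x y != zQ.
Proof.
move=> nx; have [y | xA0] := pickP (fun y => mulQ x y != zQ); first by exists y.
by case/eqP: nx; apply: annQ_eq0 => y; apply/eqP/negbFE/xA0.
Qed.

(** * Minimal ideals *)

Local Notation mins := (min_ideals D).

Lemma idealP (I : {set Abar}) : reflect
  [/\ zQ \in I, forall x y, x \in I -> y \in I -> addQ x y \in I &
      forall a x, x \in I -> mulQ a x \in I] (is_ideal I).
Proof.
apply: (iffP and3P) => [[I0 /forallP ID /forallP IM] | [I0 ID IM]]; split => //.
- by move=> x y xI yI; have /forallP/(_ y) := ID x; rewrite xI yI.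
- by move=> a x xI; have /forallP/(_ x) := IM a; rewrite xI => /andP[].
- by apply/forallP => x; apply/forallP => y; apply/implyP => xI; apply/implyP; apply: ID.
- by apply/forallP => a; apply/forallP => x; apply/implyP => xI; rewrite IM // mulQC IM.
Qed.

Lemma min_idealP (I : {set Abar}) : reflect
  [/\ is_ideal I, I != [set zQ] &
      forall J, is_ideal J -> J \subset I -> J = [set zQ] \/ J = I] (I \in mins).
Proof.
rewrite inE; apply: (iffP and3P) => [[II nI /forallP IJ] | [II nI IJ]]; split => //.
  by move=> J JI sJI; have := IJ J; rewrite JI sJI => /orP[] /eqP; [left | right].
by apply/forallP => J; apply/implyP => /andP[JI /(IJ J JI)[]->]; rewrite eqxx ?orbT.
Qed.

Lemma exists_neq0 (I : {set Abar}) :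
  zQ \in I -> I != [set zQ] -> exists2 x, x \in I & x != zQ.
Proof.
move=> I0 nI; have [x /andP[] | I_0] := pickP (fun x => (x \in I) && (x != zQ)).
  by exists x.
case/eqP: nI; apply/setP => x; rewrite inE; apply/idP/eqP => [xI | ->] //.
by apply/eqP; have := I_0 x; rewrite xI => /negbFE.
Qed.

Definition actQs g (I : {set Abar}) := [set actQ g x | x in I].

Lemma mem_actQs g I y : g \in G -> (y \in actQs g I) = (actQ g^-1 y \in I).
Proof.
move=> Gg; apply/imsetP/idP => [[x xI ->] | yI]; first by rewrite actQK.
by exists (actQ g^-1 y); rewrite ?actQKV.
Qed.

Lemma actQsK g I : g \in G -> actQs g^-1 (actQs g I) = I.
Proof.
by move=> Gg; apply/setP => y; rewrite mem_actQs ?groupV // invgK mem_actQs // actQK.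
Qed.

Lemma actQsKV g I : g \in G -> actQs g (actQs g^-1 I) = I.
Proof. by move=> Gg; rewrite -{1}(invgK g) actQsK ?groupV. Qed.

Lemma actQs0 g : g \in G -> actQs g [set zQ] = [set zQ].
Proof. by move=> Gg; rewrite /actQs imset_set1 actQ0. Qed.

Lemma actQs_ideal g I : g \in G -> is_ideal I -> is_ideal (actQs g I).
Proof.
move=> Gg /idealP[I0 ID IM]; apply/idealP; split.
- by rewrite mem_actQs // actQ0 ?groupV.
- by move=> x y; rewrite !mem_actQs // actQD ?groupV //; apply: ID.
- by move=> a x; rewrite !mem_actQs // actQM ?groupV //; apply: IM.
Qed.

Lemma actQs_min g I : g \in G -> I \in mins -> actQs g I \in mins.
Proof.
move=> Gg /min_idealP[II nI IJ]; apply/min_idealP; split; first exact: actQs_ideal.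
  by apply: contra nI => /eqP IJ0; rewrite -(actQsK I Gg) IJ0 actQs0 ?groupV.
move=> J JI sJI; have sJI' : actQs g^-1 J \subset I by rewrite -(actQsK I Gg) imsetS.
case: (IJ _ (actQs_ideal (groupVr Gg) JI) sJI') => IJ0; [left | right].
  by rewrite -(actQsKV J Gg) IJ0 actQs0.
by rewrite -(actQsKV J Gg) IJ0.
Qed.

Lemma min_ideal_eq I J x : I \in mins -> J \in mins ->
  x \in I -> x \in J -> x != zQ -> I = J.
Proof.
move=> /min_idealP[II nI IK] /min_idealP[IJ nJ JK] xI xJ nx.
have [I0 ID IM] := idealP _ II; have [J0 JD JM] := idealP _ IJ.
have IIJ : is_ideal (I :&: J).
  apply/idealP; split; first by rewrite inE I0 J0.
    by move=> a b; rewrite !inE => /andP[aI aJ] /andP[bI bJ]; rewrite ID ?JD.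
  by move=> a b; rewrite !inE => /andP[bI bJ]; rewrite IM ?JM.
case: (IK _ IIJ (subsetIl I J)) => [IJ0 | /setIidPl sIJ].
  have : x \in I :&: J by rewrite inE xI xJ.
  by rewrite IJ0 inE (negbTE nx).
by case: (JK _ II sIJ) => // I0'; rewrite I0' eqxx in nI.
Qed.

Lemma mulQ_min_ideals I J a b : I \in mins -> J \in mins -> I != J ->
  a \in I -> b \in J -> mulQ a b = zQ.
Proof.
move=> minI minJ nIJ aI bJ; have [//|nab] := eqVneq (mulQ a b) zQ; case/eqP: nIJ.
have [/idealP[_ _ IM] _ _] := min_idealP _ minI.
have [/idealP[_ _ JM] _ _] := min_idealP _ minJ.
by apply: (min_ideal_eq minI minJ _ _ nab); rewrite ?JM // mulQC IM.
Qed.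

Lemma exists_min_ideal : exists I, I \in mins.
Proof.
pose nz_ideal (J : {set Abar}) := is_ideal J && (J != [set zQ]).
have nzT : nz_ideal [set: Abar].
  apply/andP; split; first by apply/idealP; split=> *; rewrite inE.
  have [d [e de]] := exists_bvec_mulQ_neq0; apply/eqP => T0.
  by have := in_setT (mulQ (pi (bvec d)) (pi (bvec e))); rewrite T0 inE (negbTE de).
have [I /andP[II nI] Imin] := arg_minnP (fun J : {set Abar} => #|J|) nzT.
exists I; apply/min_idealP; split=> // J JI sJI.
have [->|nJ] := eqVneq J [set zQ]; [by left | right].
by apply/eqP; rewrite eqEcard sJI Imin // /nz_ideal JI nJ.
Qed.

Definition Gspan (I : {set Abar}) := [set y : Abar | [exists f : {ffun gT -> Abar},
  [forall (g | g \in G), f g \in I] && (y == \big[addQ/zQ]_(g in G) actQ g (f g))]].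

Lemma GspanP (I : {set Abar}) y : reflect
  (exists2 f : {ffun gT -> Abar}, forall g, g \in G -> f g \in I &
     y = \big[addQ/zQ]_(g in G) actQ g (f g)) (y \in Gspan I).
Proof.
rewrite inE; apply: (iffP existsP) => [[f /andP[/forall_inP fI /eqP->]] | [f fI ->]].
  by exists f.
by exists f; rewrite eqxx andbT; apply/forall_inP.
Qed.

Lemma Gspan_full I : I \in mins -> forall y, y \in Gspan I.
Proof.
case/min_idealP => /idealP[I0 ID IM] nI _; apply: Gstable_full.
- apply/GspanP; exists [ffun=> zQ] => [g _|]; first by rewrite ffunE.
  by rewrite big1 // => g Gg; rewrite ffunE actQ0.
- move=> a b /GspanP[f fI ->] /GspanP[f' f'I ->]; apply/GspanP.
  exists [ffun g => addQ (f g) (f' g)] => [g Gg|]; first by rewrite ffunE ID ?fI ?f'I.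
  by rewrite -big_split; apply: eq_bigr => g Gg; rewrite ffunE actQD.
- move=> h a Gh /GspanP[f fI ->]; apply/GspanP.
  exists [ffun g => f (g * h^-1)%g] => [g Gg|]; first by rewrite ffunE fI ?groupM ?groupV.
  rewrite actQ_sum // [RHS](reindex_inj (mulIg h)) /=.
  apply: eq_big => [g | g Gg]; first by rewrite groupMr.
  by rewrite ffunE mulgK actQ_mul.
- move=> d a /GspanP[f fI ->]; apply/GspanP.
  exists [ffun g => mulQ (actQ g^-1 (pi (bvec d))) (f g)] => [g Gg|].
    by rewrite ffunE IM ?fI.
  by rewrite mulQ_sumr; apply: eq_bigr => g Gg; rewrite ffunE actQM // actQKV.
- have [x xI nx] := exists_neq0 I0 nI; exists x => //; apply/GspanP.
  exists [ffun g => if g == 1%g then x else zQ] => [g Gg|].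
    by rewrite ffunE; case: ifP.
  rewrite (bigD1 1%g) ?group1 //= ffunE eqxx actQ1 big1 ?addQ0 //.
  by move=> g /andP[Gg ng]; rewrite ffunE (negbTE ng) actQ0.
Qed.

Lemma min_ideals_trans I J : I \in mins -> J \in mins ->
  exists2 g, g \in G & actQs g I = J.
Proof.
move=> minI minJ; have [/idealP[J0 _ JM] nJ _] := min_idealP _ minJ.
have [y yJ ny] := exists_neq0 J0 nJ; have [z yz] := exists_mulQ_neq0 ny.
have /GspanP[f fI Ez] := Gspan_full minI z.
have [g Gg yfg] : exists2 g, g \in G & mulQ y (actQ g (f g)) != zQ.
  have [g /andP[]|yf0] := pickP (fun g => (g \in G) && (mulQ y (actQ g (f g)) != zQ)).
    by exists g.
  case/negP: yz; rewrite Ez mulQ_sumr big1 // => g Gg.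
  by apply/eqP; have := yf0 g; rewrite Gg => /negbFE.
exists g => //; apply: (min_ideal_eq (actQs_min Gg minI) minJ _ _ yfg).
  have [/(actQs_ideal Gg)/idealP[_ _ IM] _ _] := min_idealP _ minI.
  by apply: IM; apply/imsetP; exists (f g); rewrite ?fI.
by rewrite mulQC JM.
Qed.

Lemma min_ideals_span x : exists f : {set Abar} -> Abar,
  (forall I, I \in mins -> f I \in I) /\ x = \big[addQ/zQ]_(I in mins) f I.
Proof.
have [I0 minI0] := exists_min_ideal; have /GspanP[f fI ->] := Gspan_full minI0 x.
exists (fun J => \big[addQ/zQ]_(g in G | actQs g I0 == J) actQ g (f g)); split.
  move=> J minJ; have [/idealP[J0 JD _] _ _] := min_idealP _ minJ.
  apply: (big_ind (fun y => y \in J)) => // g /andP[Gg /eqP<-].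
  by apply/imsetP; exists (f g); rewrite ?fI.
rewrite (partition_big (actQs^~ I0) (fun J => J \in mins)) // => g Gg.
exact: actQs_min.
Qed.

Lemma min_ideals_direct x (f f' : {set Abar} -> Abar) :
  (forall I, I \in mins -> f I \in I) -> (forall I, I \in mins -> f' I \in I) ->
  \big[addQ/zQ]_(I in mins) f I = x -> \big[addQ/zQ]_(I in mins) f' I = x ->
  forall I, I \in mins -> f I = f' I.
Proof.
move=> fI f'I Ef Ef' I minI; pose h J := addQ (f J) (f' J).
have h0 : \big[addQ/zQ]_(J in mins) h J = zQ by rewrite big_split /= Ef Ef' addQxx.
have hJ J : J \in mins -> h J \in J.
  move=> minJ; have [/idealP[_ JD _] _ _] := min_idealP _ minJ.
  by apply: JD; [apply: fI | apply: f'I].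
apply: addQ_eq0; apply: annQ_eq0 => y; have [k [kI ->]] := min_ideals_span y.
rewrite mulQ_sumr big1 // => K minK.
have [<- | nIK] := eqVneq I K; last first.
  exact: mulQ_min_ideals minI minK nIK (hJ I minI) (kI K minK).
have := congr1 (fun z => mulQ z (k I)) h0; rewrite /= mul0Q mulQ_suml (bigD1 I) //=.
rewrite big1 ?addQ0 // => K' /andP[minK' nK'].
exact: mulQ_min_ideals minK' minI nK' (hJ _ minK') (kI I minI).
Qed.

End FischerAlgebra.

Theorem corollary2p6 (gT : finGroupType) (G : {group gT}) (D : {set gT})
  (HDclass : exists2 x, x \in G & D = (x ^: G)%g)
  (HDinv : forall d, d \in D -> #[d]%g = 2)
  (HDgen : <<D>>%g = G)
  (HDord : forall d e, d \in D -> e \in D -> #[(d * e)%g]%g \in [:: 1; 2; 3])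
  (Hline : exists d e : elD D,
      ncomm d e && ~~ vanishing D [set val d; val e; (val d ^ val e)%g]) :
  direct_sum_of_min_ideals D /\
  (forall g, g \in G -> forall I, I \in min_ideals D ->
       [set actQ g x | x in I] \in min_ideals D) /\
  (forall I J, I \in min_ideals D -> J \in min_ideals D ->
       exists2 g, g \in G & [set actQ g x | x in I] = J).
Proof.
have [x Gx Dclass] := HDclass.
split; [move=> y; split | split].
- exact: min_ideals_span Gx Dclass HDinv HDord Hline y.
- exact: min_ideals_direct Gx Dclass HDinv HDord Hline y.
- move=> g Gg I; exact: (actQs_min Gx Dclass HDinv HDord Gg).
- exact: min_ideals_trans Gx Dclass HDinv HDord Hline.
Qed.
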